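(* Let $\mathcal{G}=(V,E)$ be an unweighted simple directed graph, let $i\neq j$ be two distinct nodes of $V$, and let $\phi$ be a spanning converging forest chosen uniformly at random from the set $\mathcal{F}$ of all spanning converging forests of $\mathcal{G}$. Define $$\widetilde{\omega}_{ij}(\phi)=\frac{1}{1+d_j}\sum_{k\in N^-_j}\widehat{\omega}_{ik}(\phi).$$ Then $\widetilde{\omega}_{ij}$ is an unbiased estimator of $\omega_{ij}$, i.e. $\mathbb{E}(\widetilde{\omega}_{ij}(\phi))=\omega_{ij}$, its variance is $${\rm Var}(\widetilde{\omega}_{ij})=\frac{\omega_{ij}}{1+d_j}-\omega_{ij}^2,$$ and this variance is always less than or equal to the variance of the estimator $\widehat{\omega}_{ij}(\phi)$.
   Context: $\mathcal{G}=(V,E)$ has $n$ nodes; $a_{ij}=1$ if $(i,j)\in E$ and $0$ otherwise. $d_i=\sum_j a_{ij}$ is the out-degree of $i$, $\mathbf{D}=\mathrm{diag}(d_1,\dots,d_n)$, $\mathbf{L}=\mathbf{D}-\mathbf{A}$ is the Laplacian, and the forest matrix is $\mathbf{\Omega}=(\mathbf{I}+\mathbf{L})^{-1}=(\omega_{ij})$. $N^-_j=\{k:(k,j)\in E\}$ is the set of in-neighbors of $j$. A rooted converging tree is a weakly connected digraph without cycles in which one node (the root) has out-degree $0$ and every other node has out-degree $1$ (an isolated node is such a tree, rooted at itself). A spanning converging forest of $\mathcal{G}$ is a spanning subgraph (containing all of $V$ and a subset of $E$) whose weakly connected components are rooted converging trees. For such a forest $\phi$ and node $i$, $r_\phi(i)$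 denotes the root of the tree of $\phi$ containing $i$. The basic estimator is $\widehat{\omega}_{ij}(\phi)=\mathbb{I}_{\{r_\phi(i)=j\}}$, which equals $1$ if $r_\phi(i)=j$ and $0$ otherwise. *)

From HB Require Import structures.
From mathcomp Require Import all_boot all_order all_algebra.
Set Implicit Arguments. Unset Strict Implicit. Unset Printing Implicit Defensive.
Import Order.TTheory GRing.Theory Num.Theory.
Local Open Scope ring_scope.

(* A directed graph on the node set 'I_n is given by its edge relation
   e : rel 'I_n, with a_ij = 1 iff e i j.  Simple = no self-loops
   (multi-edges are impossible in this representation). *)
Definition simple_digraph (n : nat) (e : rel 'I_n) : Prop := irreflexive e.

Definition outdeg (n : nat) (e : rel 'I_n) (i : 'I_n) : nat := #|[set j | e i j]|.

Section Matrices.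
Variables (R : realFieldType) (n : nat) (e : rel 'I_n).
Definition adjmx : 'M[R]_n := \matrix_(i, j) (e i j)%:R.
Definition degmx : 'M[R]_n := \matrix_(i, j) ((i == j)%:R * (outdeg e i)%:R).
Definition laplacian : 'M[R]_n := degmx - adjmx.
Definition forest_matrix : 'M[R]_n := invmx (1%:M + laplacian).
End Matrices.

Section Forests.
Variables (n : nat).
(* a spanning subgraph is given by its edge set *)
Implicit Types (F : {set 'I_n * 'I_n}).

Definition frel F : rel 'I_n := fun x y => (x, y) \in F.
Definition fdeg F (x : 'I_n) : nat := #|[set y | (x, y) \in F]|.
Definition wrel F : rel 'I_n := fun x y => ((x, y) \in F) || ((y, x) \in F).
Definition wcomp F (x : 'I_n) : {set 'I_n} := [set y | connect (wrel F) x y].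

Definition rooted_converging_tree F (C : {set 'I_n}) : bool :=
  [forall y in C, ~~ [exists z, ((y, z) \in F) && connect (frel F) z y]] &&
  [exists r in C, (fdeg F r == 0)%N &&
     [forall y in C, (y != r) ==> (fdeg F y == 1)%N]].

Definition spanning_converging_forest (e : rel 'I_n) F : bool :=
  (F \subset [set p | e p.1 p.2]) &&
  [forall x, rooted_converging_tree F (wcomp F x)].

Definition forests (e : rel 'I_n) : {set {set 'I_n * 'I_n}} :=
  [set F | spanning_converging_forest e F].

Definition froot F (i : 'I_n) : 'I_n :=
  odflt i [pick r | (r \in wcomp F i) && (fdeg F r == 0)%N].
End Forests.

Section Estimators.
Variables (R : realFieldType) (n : nat) (e : rel 'I_n).

(* uniform distribution on the spanning converging forests *)
Definition Exp (X : {set 'I_n * 'I_n} -> R) : R :=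
  (\sum_(F in forests e) X F) / #|forests e|%:R.
Definition Var (X : {set 'I_n * 'I_n} -> R) : R :=
  Exp (fun F => X F ^+ 2) - (Exp X) ^+ 2.

Definition omega_hat (i j : 'I_n) (F : {set 'I_n * 'I_n}) : R :=
  (froot F i == j)%:R.
Definition omega_tilde (i j : 'I_n) (F : {set 'I_n * 'I_n}) : R :=
  (1 + (outdeg e j)%:R)^-1 * \sum_(k | e k j) omega_hat i k F.
End Estimators.

From HB Require Import structures.
From mathcomp Require Import all_boot all_order all_algebra.
From mathcomp Require Import ring.
Set Implicit Arguments. Unset Strict Implicit. Unset Printing Implicit Defensive.
Import Order.TTheory GRing.Theory Num.Theory.

(* Let c(x, y) be the number of spanning converging forests in which the root
   of x is y.  Deleting the out-edge (x, l) of x maps the forests in which x is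
   not a root bijectively onto the pairs (G, l) where x is a root of G, x -> l
   is an edge and l lies outside the tree of x in G.  Counting roots along this
   bijection gives
     (1 + d_x) c(x, y) = [x = y] |F| + sum_(x -> k) c(k, y),
   i.e. (I + L) c = |F| I, so Omega_xy = c(x, y) / |F| = E[omega_hat_xy]: this
   is the matrix-forest theorem.  Read on the other side, Omega (I + L) = I
   says (1 + d_j) Omega_ij = sum_(k in N^-_j) Omega_ik for i <> j, which is the
   unbiasedness of omega_tilde.  As r_phi(i) is a single node, omega_tilde is
   the indicator of r_phi(i) in N^-_j scaled by 1 / (1 + d_j), hence
   E[omega_tilde^2] = E[omega_tilde] / (1 + d_j) <= Omega_ij = E[omega_hat^2]. *)

Section ForestGraph.
Variable n : nat.
Implicit Types (F G : {set 'I_n * 'I_n}) (x y z : 'I_n).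

Definition fparent F x : 'I_n := odflt x [pick y | (x, y) \in F].
Definition iroot F x : 'I_n := iter n (fparent F) x.

Record forest_graph F : Prop := ForestGraph {
  forest_functional : forall x y y', (x, y) \in F -> (x, y') \in F -> y = y';
  forest_acyclic : forall y z, (y, z) \in F -> ~~ connect (frel F) z y }.

Lemma sub_connect_frel G F x y :
  G \subset F -> connect (frel G) x y -> connect (frel F) x y.
Proof.
move=> sGF; apply: connect_sub => a b ab; apply: connect1.
by rewrite /frel (subsetP sGF).
Qed.

Lemma connect_frel_wrel F x y : connect (frel F) x y -> connect (wrel F) x y.
Proof. by apply: connect_sub => a b ab; apply: connect1; apply/orP; left. Qed.

Lemma forest_graph_sub G F : G \subset F -> forest_graph F -> forest_graph G.
Proof.
move=> sGF [funF acF]; split=> [x y y' /(subsetP sGF) + /(subsetP sGF)|y z yz].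
  exact: funF.
apply: contraNN (acF y z (subsetP sGF _ yz)); exact: sub_connect_frel.
Qed.

Lemma fparent_edge F x : fparent F x != x -> (x, fparent F x) \in F.
Proof. by rewrite /fparent; case: pickP => [y|] //=; rewrite eqxx. Qed.

Lemma connect_fparent F x : connect (frel F) x (fparent F x).
Proof.
have [-> | /fparent_edge xpx] := eqVneq (fparent F x) x; first exact: connect0.
exact: connect1.
Qed.

Lemma connect_iter_fparent F k x : connect (frel F) x (iter k (fparent F) x).
Proof.
elim: k => [|k IHk] /=; first exact: connect0.
exact: connect_trans IHk (connect_fparent _ _).
Qed.

Lemma connect_iroot F x : connect (frel F) x (iroot F x).
Proof. exact: connect_iter_fparent. Qed.

Lemma iroot_id F x : fparent F x = x -> iroot F x = x.
Proof. exact: iter_fix. Qed.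

Lemma fdeg0P F x : reflect (forall y, (x, y) \notin F) (fdeg F x == 0%N).
Proof.
rewrite /fdeg cards_eq0; apply: (iffP eqP) => [F0 y | noF].
  by apply/negP => xy; have := in_set0 y; rewrite -F0 inE xy.
by apply/setP => y; rewrite !inE (negbTE (noF y)).
Qed.

Lemma fdeg_le1P F x :
  reflect (forall y y', (x, y) \in F -> (x, y') \in F -> y = y') (fdeg F x <= 1)%N.
Proof.
apply: (iffP card_le1_eqP) => [F1 y y' xy xy' | funF y y'].
  by apply: F1; rewrite inE.
by rewrite !inE => xy xy'; apply: funF.
Qed.

Section Forest.
Variable F : {set 'I_n * 'I_n}.
Hypothesis forestF : forest_graph F.

Lemma forest_irrefl x : (x, x) \notin F.
Proof. by apply/negP => /(forest_acyclic forestF); rewrite connect0. Qed.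

Lemma fparentP x y : (x, y) \in F -> fparent F x = y.
Proof.
rewrite /fparent; case: pickP => [y' xy' xy | /(_ y) -> //].
exact: forest_functional xy' xy.
Qed.

Lemma fparent_fixP x : reflect (forall y, (x, y) \notin F) (fparent F x == x).
Proof.
apply: (iffP eqP) => [px y | noF]; last first.
  by rewrite /fparent; case: pickP => [y xy|] //; have := noF y; rewrite xy.
by apply/negP => xy; move: (xy); rewrite -(fparentP xy) px (negbTE (forest_irrefl x)).
Qed.

(* Among the n + 1 iterates x, p x, ..., p^n x of the parent map p two
   coincide; by acyclicity the resulting cycle is a fixed point, which p^n x
   has already reached. *)
Lemma fparent_iroot x : fparent F (iroot F x) = iroot F x.
Proof.
pose g (k : 'I_n.+1) := iter k (fparent F) x.
have /injectivePn[a [b neq_ab eq_gab]] : ~~ injectiveb g.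
  by apply/injectiveP => /leq_card; rewrite !card_ord ltnn.
wlog lt_ab : a b neq_ab eq_gab / a < b.
  move=> W; case: (ltngtP a b) => [|lt_ba|/val_inj eq_ab]; first exact: W.
    by apply: (W b a) => //; rewrite eq_sym.
  by rewrite eq_ab eqxx in neq_ab.
set y := g a; have cyc_y : iter (b - a) (fparent F) y = y.
  by rewrite /y /g -iterD subnK ?(ltnW lt_ab).
have fix_y : fparent F y = y.
  apply/eqP/negPn/negP => /fparent_edge /(forest_acyclic forestF); rewrite -{2}cyc_y.
  by rewrite -(prednK (_ : 0 < b - a)%N) ?subn_gt0 // iterSr connect_iter_fparent.
have le_an : (a <= n)%N := ltnW (leq_trans lt_ab (ltn_ord b)).
have -> : iroot F x = iter (n - a) (fparent F) y by rewrite /y /g -iterD subnK.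
by rewrite iter_fix.
Qed.
Lemma iroot_fparent x : iroot F (fparent F x) = iroot F x.
Proof. by rewrite /iroot -iterSr iterS fparent_iroot. Qed.

Lemma iroot_edge y z : (y, z) \in F -> iroot F z = iroot F y.
Proof. by move/fparentP <-; rewrite iroot_fparent. Qed.

Lemma iroot_wconnect x y : connect (wrel F) x y -> iroot F x = iroot F y.
Proof.
case/connectP => p + ->; elim: p x => [|z p IHp] x //= /andP[xz /IHp <-].
by case/orP: xz => /iroot_edge ->.
Qed.

Lemma iroot_connect x y : connect (frel F) x y -> iroot F x = iroot F y.
Proof. by move/connect_frel_wrel/iroot_wconnect. Qed.

Lemma iroot_unique x r : connect (frel F) x r -> fparent F r = r -> iroot F x = r.
Proof. by move/iroot_connect -> => /iroot_id. Qed.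

Lemma fdeg_iroot x : fdeg F (iroot F x) = 0%N.
Proof. by apply/eqP/fdeg0P/fparent_fixP; rewrite fparent_iroot. Qed.

Lemma froot_iroot x : froot F x = iroot F x.
Proof.
rewrite /froot; case: pickP => [r /andP[] | /(_ (iroot F x))] /=.
  by rewrite inE => /iroot_wconnect -> /fdeg0P/fparent_fixP/eqP/iroot_id.
by rewrite inE fdeg_iroot eqxx andbT connect_frel_wrel // connect_iroot.
Qed.
End Forest.
End ForestGraph.

Lemma forestP {n} {e : rel 'I_n} {F : {set 'I_n * 'I_n}} :
  reflect (F \subset [set p | e p.1 p.2] /\ forest_graph F) (F \in forests e).
Proof.
rewrite inE; apply: (iffP andP) => -[Fe]; [move/forallP => trees | move=> forestF].
  split=> //; split=> [x y y' | y z yz].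
    apply/fdeg_le1P; have /andP[_ /existsP[r /and3P[_ /eqP r0 /forallP deg1]]] := trees x.
    have [-> | x_ne] := eqVneq x r; first by rewrite r0.
    by have := deg1 x; rewrite inE connect0 x_ne => /eqP ->.
  have /andP[/forallP /(_ y) + _] := trees y.
  by rewrite inE connect0 => /existsPn /(_ z); rewrite yz.
split=> //; apply/forallP => x; apply/andP; split.
  apply/forallP => y; apply/implyP => _; apply/existsPn => z.
  by apply/negP => /andP[/(forest_acyclic forestF)/negP nzy /nzy].
apply/existsP; exists (iroot F x).
rewrite inE connect_frel_wrel ?connect_iroot // fdeg_iroot //=.
apply/forallP => y; apply/implyP; rewrite inE => xy; apply/implyP => y_ne.
rewrite eqn_leq; apply/andP; split; first by apply/fdeg_le1P; apply: forest_functional.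
rewrite lt0n; apply: contra y_ne => /fdeg0P /(fparent_fixP forestF) /eqP /iroot_id y_root.
by rewrite (iroot_wconnect forestF xy) y_root.
Qed.

Lemma set0_forest n (e : rel 'I_n) : set0 \in forests e.
Proof. by apply/forestP; split; [apply: sub0set | split=> x y; rewrite in_set0]. Qed.

Lemma connect_setU1 n (G : {set 'I_n * 'I_n}) i l a b :
  connect (frel ((i, l) |: G)) a b ->
  connect (frel G) a b \/ connect (frel G) a i /\ connect (frel G) l b.
Proof.
case/connectP => p + ->; elim: p a => [|c p IHp] a /=; first by left.
rewrite /frel in_setU1 => /andP[/orP[/eqP[-> ->] | ac] /IHp[cb | [ci lb]]].
- by right; split.
- by right; split.
- by left; apply: connect_trans (connect1 ac) cb.
- by right; split=> //; apply: connect_trans (connect1 ac) ci.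
Qed.

Section AddRootEdge.
Variables (n : nat) (G : {set 'I_n * 'I_n}) (i l : 'I_n).
Hypotheses (forestG : forest_graph G) (i_root : fparent G i = i).
Hypothesis l_off_tree : iroot G l != i.

Lemma forest_graph_setU1 : forest_graph ((i, l) |: G).
Proof.
have no_i y : (i, y) \notin G by apply/(fparent_fixP forestG)/eqP.
split=> [x y y' | y z].
  have [-> | x_ne] := eqVneq x i.
    by rewrite !in_setU1 !(negbTE (no_i _)) !orbF => /eqP[->] /eqP[->].
  rewrite !in_setU1 !xpair_eqE (negbTE x_ne) /=; exact: forest_functional.
have nli : ~~ connect (frel G) l i.
  by apply: contra l_off_tree => /(iroot_connect forestG) ->; rewrite iroot_id.
rewrite in_setU1 => /orP[/eqP[-> ->] | yz]; apply/negP.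
  by case/connect_setU1 => [li | [li _]]; rewrite li in nli.
case/connect_setU1 => [zy | [zi ly]].
  by have := forest_acyclic forestG yz; rewrite zy.
by rewrite (connect_trans ly (connect_trans (connect1 yz) zi)) in nli.
Qed.

Lemma iroot_setU1 x :
  iroot ((i, l) |: G) x = if iroot G x == i then iroot G l else iroot G x.
Proof.
have forestGl := forest_graph_setU1.
have subG : G \subset (i, l) |: G by apply/subsetP => p; rewrite in_setU1 orbC => ->.
have lift a b : connect (frel G) a b -> connect (frel ((i, l) |: G)) a b.
  exact: sub_connect_frel.
have root_new r : r != i -> fparent G r = r -> fparent ((i, l) |: G) r = r.
  move=> r_ne /eqP/(fparent_fixP forestG) noG; apply/eqP/(fparent_fixP forestGl) => y.
  by rewrite in_setU1 negb_or noG andbT; apply: contra r_ne => /eqP[->].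
case: ifP => [/eqP xi | /negbT x_ne]; apply: (iroot_unique forestGl).
- apply: connect_trans (lift _ _ (connect_iroot G x)) _; rewrite xi.
  apply: connect_trans (connect1 _) (lift _ _ (connect_iroot G l)).
  by rewrite /frel setU11.
- by apply: root_new l_off_tree _; rewrite fparent_iroot.
- exact: lift (connect_iroot G x).
- by apply: root_new x_ne _; rewrite fparent_iroot.
Qed.
End AddRootEdge.

Section DeleteEdge.
Variables (n : nat) (F : {set 'I_n * 'I_n}) (i l : 'I_n).
Hypotheses (forestF : forest_graph F) (il : (i, l) \in F).

Lemma forest_graph_setD1 : forest_graph (F :\ (i, l)).
Proof. exact: forest_graph_sub (subD1set F (i, l)) forestF. Qed.

Lemma fparent_setD1 : fparent (F :\ (i, l)) i = i.
Proof.
apply/eqP/(fparent_fixP forest_graph_setD1) => y; rewrite in_setD1.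
by apply/negP => /andP[+ iy]; rewrite (forest_functional forestF iy il) eqxx.
Qed.

Lemma iroot_setD1 : iroot (F :\ (i, l)) l != i.
Proof.
apply: contraNneq (forest_acyclic forestF il) => li.
by apply: sub_connect_frel (subD1set F (i, l)) _; rewrite -{2}li connect_iroot.
Qed.
End DeleteEdge.

Lemma big_forests_split_root n (e : rel 'I_n) (i : 'I_n)
    (R : Type) (idx : R) (op : Monoid.com_law idx) (h : {set 'I_n * 'I_n} -> R) :
  \big[op/idx]_(F in forests e) h F =
  \big[op/idx]_(G in forests e | fparent G i == i)
     op (h G) (\big[op/idx]_(l | e i l && (iroot G l != i)) h ((i, l) |: G)).
Proof.
rewrite (bigID (fun F => fparent F i == i)) /= big_split /=; congr (op _ _).
rewrite (partition_big (fun F => fparent F i) predT) //= [RHS](exchange_big_dep predT) //=.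
apply: eq_bigr => l _.
rewrite (reindex_onto (fun G => (i, l) |: G) (fun F => F :\ (i, l))) /=; last first.
  move=> F /andP[/andP[_ /fparent_edge]]; rewrite eq_sym => + /eqP il.
  by rewrite il; apply: setD1K.
apply: eq_bigl => G; apply/idP/idP.
  set F := (i, l) |: G.
  case/andP => /andP[/andP[/forestP[Fe forestF] /fparent_edge]] + /eqP pil.
  rewrite pil => il /eqP <-.
  have -> : e i l by have := subsetP Fe _ il; rewrite inE.
  rewrite fparent_setD1 // iroot_setD1 // eqxx !andbT.
  apply/forestP; split; last exact: forest_graph_setD1.
  exact: subset_trans (subD1set _ _) Fe.
case/andP => /andP[/forestP[Ge forestG] /eqP i_root] /andP[eil l_off].
have forestGl := forest_graph_setU1 forestG i_root l_off.
have pil : fparent ((i, l) |: G) i = l by apply: (fparentP forestGl); rewrite setU11.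
rewrite pil eqxx andbT setU1K; last by apply/(fparent_fixP forestG)/eqP.
rewrite eqxx (contraNneq _ l_off) => [|->]; last by rewrite iroot_id.
rewrite !andbT; apply/forestP; split=> //; apply/subsetP => p; rewrite in_setU1.
by case/orP => [/eqP -> | /(subsetP Ge)]; rewrite ?inE.
Qed.

Section RootCount.
Variables (n : nat) (e : rel 'I_n).

Definition root_count (x y : 'I_n) : nat := \sum_(F in forests e) (froot F x == y).

Section Fiber.
Variables (G : {set 'I_n * 'I_n}) (i y : 'I_n).
Hypotheses (forestG : forest_graph G) (i_root : fparent G i = i).
Local Notation r := (iroot G).

Lemma root_count_rec_fiber :
  ((1 + outdeg e i) * (r i == y) +
   \sum_(l | e i l && (r l != i)) (1 + outdeg e i) * (iroot ((i, l) |: G) i == y) =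
   (i == y) + \sum_(k | e i k) (r k == y) +
   \sum_(l | e i l && (r l != i))
      ((i == y) + \sum_(k | e i k) (iroot ((i, l) |: G) k == y)))%N.
Proof.
have r_i : r i = i by apply: iroot_id.
(* Both sides equal (1 + d_i) ([i = y] + a), where a counts the out-neighbours
   of i outside its tree whose root is y. *)
pose a := \sum_(l | e i l && (r l != i)) (r l == y).
pose b := \sum_(k | e i k && (r k == i)) 1%N.
pose m := \sum_(l | e i l && (r l != i)) 1%N.
have deg_i : outdeg e i = (b + m)%N.
  rewrite /outdeg -sum1_card (bigID (fun k => r k == i)) /=.
  by congr (_ + _); apply: eq_bigl => k; rewrite inE.
have sum_const c : \sum_(l | e i l && (r l != i)) c = (m * c)%N.
  by rewrite /m big_distrl /=; apply: eq_bigr => l _; rewrite mul1n.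
have sum_r (s : 'I_n -> 'I_n) v : (forall k, r k == i -> s k = v) ->
    (forall k, r k != i -> s k = r k) ->
    \sum_(k | e i k) (s k == y) = (b * (v == y) + a)%N.
  move=> s_in s_off; rewrite (bigID (fun k => r k == i)) /= big_distrl /=.
  congr (_ + _); apply: eq_bigr => k /andP[_ rk]; first by rewrite s_in // mul1n.
  by rewrite s_off.
transitivity ((1 + outdeg e i) * ((i == y) + a))%N.
  rewrite r_i mulnDr big_distrr /=; congr (_ + _).
  by apply: eq_bigr => l /andP[_ l_off]; rewrite iroot_setU1 // r_i eqxx.
rewrite (sum_r r i) => [|k /eqP //|//].
rewrite (eq_bigr (fun l => (i == y) + (b * (r l == y) + a))%N); last first.
  move=> l /andP[_ l_off]; congr (_ + _).
  by apply: sum_r => k; rewrite iroot_setU1 //; case: eqP.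
rewrite big_split /= big_split /= !sum_const -(big_distrr b) /= -/a deg_i.
ring.
Qed.
End Fiber.

Lemma root_count_rec i y :
  ((1 + outdeg e i) * root_count i y =
   (i == y) * #|forests e| + \sum_(k | e i k) root_count k y)%N.
Proof.
have frootE F x : F \in forests e -> froot F x = iroot F x.
  by case/forestP => _ /froot_iroot.
transitivity (\sum_(F in forests e) (1 + outdeg e i) * (iroot F i == y))%N.
  by rewrite big_distrr; apply: eq_bigr => F /frootE ->.
transitivity (\sum_(F in forests e)
                ((i == y) + \sum_(k | e i k) (iroot F k == y)))%N; last first.
  rewrite big_split /= -sum1_card big_distrr /= muln1 exchange_big /=.
  by congr (_ + _); apply: eq_bigr => k _; apply: eq_bigr => F /frootE ->.
rewrite !(big_forests_split_root e i).
by apply: eq_bigr => G /andP[/forestP[_ /root_count_rec_fiber fiberG] /eqP /fiberG].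
Qed.
End RootCount.

Local Open Scope ring_scope.

Lemma sum_natb_mull (R : pzSemiRingType) (I : finType) (P : pred I) (f : I -> R) :
  \sum_k (P k)%:R * f k = \sum_(k | P k) f k.
Proof.
by rewrite [RHS]big_mkcond; apply: eq_bigr => k _; case: (P k); rewrite ?mul1r ?mul0r.
Qed.

Lemma sum_natb_mulr (R : pzSemiRingType) (I : finType) (P : pred I) (f : I -> R) :
  \sum_k f k * (P k)%:R = \sum_(k | P k) f k.
Proof.
by rewrite [RHS]big_mkcond; apply: eq_bigr => k _; case: (P k); rewrite ?mulr1 ?mulr0.
Qed.

Lemma sqr_mul_natb (R : pzSemiRingType) (c : R) (b : bool) :
  (c * b%:R) ^+ 2 = c * (c * b%:R).
Proof. by case: b; rewrite ?mulr1 ?mulr0 ?expr0n // expr2. Qed.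

Section Expectation.
Variables (R : realFieldType) (n : nat) (e : rel 'I_n).
Implicit Type X : {set 'I_n * 'I_n} -> R.

Lemma eq_Exp X1 X2 : {in forests e, X1 =1 X2} -> Exp e X1 = Exp e X2.
Proof. by move=> eqX; rewrite /Exp (eq_bigr _ eqX). Qed.

Lemma ExpMl c X : Exp e (fun F => c * X F) = c * Exp e X.
Proof. by rewrite /Exp -mulr_sumr mulrA. Qed.

Lemma Exp_sum (P : pred 'I_n) (X : 'I_n -> {set 'I_n * 'I_n} -> R) :
  Exp e (fun F => \sum_(k | P k) X k F) = \sum_(k | P k) Exp e (X k).
Proof. by rewrite /Exp exchange_big mulr_suml. Qed.

Lemma Exp_omega_hat_root_count x y :
  Exp e (omega_hat R x y) = (root_count e x y)%:R / #|forests e|%:R.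
Proof. by rewrite /Exp natr_sum. Qed.
End Expectation.

Section ForestMatrix.
Variables (R : realFieldType) (n : nat) (e : rel 'I_n).
Hypothesis e_irrefl : irreflexive e.

Local Notation Omega := (forest_matrix R e).
Local Notation M := (\matrix_(x, y) Exp e (omega_hat R x y) : 'M[R]_n).
Local Notation d x := (1 + (outdeg e x)%:R : R).

Lemma one_add_laplacianE x k :
  (1%:M + laplacian R e) x k = (x == k)%:R * d x - (e x k)%:R.
Proof.
rewrite !mxE; have [<- | ne_xk] := eqVneq x k; first by rewrite e_irrefl /=; ring.
by rewrite mulr0n !mul0r add0r sub0r.
Qed.

Lemma laplacian_mul_Exp_omega_hat : (1%:M + laplacian R e) *m M = 1%:M.
Proof.
have N_neq0 : #|forests e|%:R != 0 :> R.
  by rewrite pnatr_eq0 -lt0n; apply/card_gt0P; exists set0; apply: set0_forest.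
apply/matrixP => x y; rewrite !mxE.
under eq_bigr => k _ do rewrite one_add_laplacianE mulrBl mxE Exp_omega_hat_root_count.
rewrite sumrB sum_natb_mull (bigD1 x) //= eqxx big1 ?addr0 => [|k /negbTE]; last first.
  by rewrite eq_sym => ->; rewrite !mul0r.
rewrite mul1r -mulr_suml -natr_sum mulrA -mulrBl.
have /(congr1 (fun m => m%:R : R)) := root_count_rec e x y.
rewrite natrM natrD natrD mulr1n => ->.
by rewrite natrM addrK mulfK.
Qed.

Lemma forest_matrixE : Omega = M.
Proof.
have [unitL _] := mulmx1_unit laplacian_mul_Exp_omega_hat.
by rewrite /forest_matrix -[RHS](mulKmx unitL) laplacian_mul_Exp_omega_hat mulmx1.
Qed.

Lemma Exp_omega_hat x y : Exp e (omega_hat R x y) = Omega x y.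
Proof. by rewrite forest_matrixE mxE. Qed.

Lemma forest_matrix_ge0 x y : 0 <= Omega x y.
Proof. by rewrite -Exp_omega_hat Exp_omega_hat_root_count divr_ge0 ?ler0n. Qed.

Lemma forest_matrix_in_neighbors x y : x != y ->
  \sum_(k | e k y) Omega x k = d y * Omega x y.
Proof.
move=> ne_xy; have /matrixP/(_ x y) := mulmx1C laplacian_mul_Exp_omega_hat.
rewrite -forest_matrixE !mxE (negbTE ne_xy).
under eq_bigr => k _ do rewrite one_add_laplacianE mulrBr.
rewrite sumrB (sum_natb_mulr (e^~ y)) (bigD1 y) //= eqxx big1 ?addr0 => [|k /negbTE ->].
  by move/eqP; rewrite mul1r subr_eq0 mulrC => /eqP.
by rewrite !mul0r mulr0.
Qed.
End ForestMatrix.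

Section Estimators.
Variables (R : realFieldType) (n : nat) (e : rel 'I_n) (i j : 'I_n).
Hypotheses (e_irrefl : irreflexive e) (ne_ij : i != j).

Local Notation Omega := (forest_matrix R e).
Local Notation d := (1 + (outdeg e j)%:R : R).

Lemma omega_tildeE F : omega_tilde R e i j F = d^-1 * (e (froot F i) j)%:R.
Proof.
congr (_ * _); rewrite big_mkcond (bigD1 (froot F i)) //= big1 => [|k ne_k].
  by rewrite /omega_hat eqxx addr0; case: (e _ j).
by rewrite /omega_hat eq_sym (negbTE ne_k); case: (e k j).
Qed.

Lemma Exp_omega_tilde : Exp e (omega_tilde R e i j) = Omega i j.
Proof.
rewrite /omega_tilde ExpMl Exp_sum.
under eq_bigr => k _ do rewrite Exp_omega_hat //.
by rewrite forest_matrix_in_neighbors // mulKf // lt0r_neq0 // ltr_wpDr.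
Qed.

Lemma Exp_omega_tilde_sqr :
  Exp e (fun F => omega_tilde R e i j F ^+ 2) = Omega i j / d.
Proof.
under eq_Exp => F _ do rewrite omega_tildeE sqr_mul_natb -omega_tildeE.
by rewrite ExpMl Exp_omega_tilde mulrC.
Qed.

Lemma Exp_omega_hat_sqr : Exp e (fun F => omega_hat R i j F ^+ 2) = Omega i j.
Proof.
under eq_Exp => F _ do rewrite -[omega_hat _ _ _ _]mul1r sqr_mul_natb !mul1r.
exact: Exp_omega_hat.
Qed.

Lemma Var_omega_tilde : Var e (omega_tilde R e i j) = Omega i j / d - Omega i j ^+ 2.
Proof. by rewrite /Var Exp_omega_tilde_sqr Exp_omega_tilde. Qed.

Lemma Var_omega_hat : Var e (omega_hat R i j) = Omega i j - Omega i j ^+ 2.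
Proof. by rewrite /Var Exp_omega_hat_sqr Exp_omega_hat. Qed.
End Estimators.

Theorem lemma4p1 (R : realFieldType) (n : nat) (e : rel 'I_n) (i j : 'I_n) :
  simple_digraph e -> i != j ->
  let Omega := forest_matrix R e in
  [/\ Exp e (omega_tilde R e i j) = Omega i j,
      Var e (omega_tilde R e i j) =
        Omega i j / (1 + (outdeg e j)%:R) - (Omega i j) ^+ 2
    & Var e (omega_tilde R e i j) <= Var e (omega_hat R i j)].
Proof.
move=> e_irrefl ne_ij Omega.
split; [exact: Exp_omega_tilde | exact: Var_omega_tilde |].
rewrite Var_omega_tilde // Var_omega_hat // lerD2r.
by rewrite ler_pdivrMr ?ler_peMr ?forest_matrix_ge0 ?lerDl ?ltr_wpDr.
Qed.
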